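(* Let $(x_n)$ be generated by (HPPA). Assume there are monotone functions ${\rm a},{\rm A},{\rm b},{\rm B},{\rm E}:\mathbb{N}\to\mathbb{N}$ satisfying (Q1), (Q2), (Q3'), (Q3), (Q4) respectively. Let $\mathcal{E},\mathcal{D}\in\mathbb{N}$ satisfy $\mathcal{E}\geq 1+\sum_{i=0}^{{\rm E}(0)}\|e_i\|$ and $\mathcal{D}\geq\|x_0-p\|$ for some $p\in S$, and set $N:=\max\{2\mathcal{D},\mathcal{D}+\mathcal{E}\}$. Then for every $k\in\mathbb{N}$ and every monotone $f:\mathbb{N}\to\mathbb{N}$, $$\exists n\leq\Phi_1(k,f)\ \forall i,j\in[n,f(n)]\ \left(\|x_i-x_j\|\leq\frac{1}{k+1}\right),$$ where $\Phi_1(k,f):=\sigma_1(\tilde k,g(\Delta))$ and: $\sigma_1(k',n'):={\rm A}\big(n'+\lceil\ln(16N^2(k'+1))\rceil\big)+1$; $\tilde k:=4(k+1)^2-1$; $g(m):=\max\{m,\ {\rm E}(16(1+4N)(k+1)^2-1)+1\}$; $h_f(m):=(1+4N)\big(16(k+1)^2(f(\sigma_1(\tilde k,g(m)))+1)+1\big)-1$; $\Delta:=\Psi(32(k+1)^2-1,\,h_f)$, where for $k'\in\mathbb{N}$ and monotone $u:\mathbb{N}\to\mathbb{N}$, $\Psi(k',u):=\chi_1\big(24N(w_{\hat\nu_u,N}^{(R)}(0)+1)^2\big)$ with $R:=4N^4(k'+1)^2$, $\nu_u(m):=\max\{2,{\rm b}(u(m))\}(u(m)+1)-1$, $\hat\nu_u(m):=\nu_u(\chi_1(m))$,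 $w_{v,N}(m):=\max\{v(24N(m+1)^2),24N(m+1)^2\}$, $\xi(k''):=\max\{{\rm a}(2(2\mathcal{D}+\mathcal{E})(k''+1)-1),{\rm E}(2k''+1)+1\}$ and $\chi_1(k''):=\max\{\xi(4k''+3),{\rm B}(8(\mathcal{D}+\mathcal{E})(k''+1)-1)\}+1$.
   Context: $X$ is a real Hilbert space, $\mathsf{A}:X\to 2^X$ a maximal monotone operator with zero set $S=\{x:0\in\mathsf{A}(x)\}$, assumed nonempty. For $\beta>0$, $J_\beta:=(Id+\beta\mathsf{A})^{-1}$ is the resolvent, a single-valued nonexpansive map with fixed point set $S$. Given $(\alpha_n)\subset\,]0,1[$, $(\beta_n)\subset(0,\infty)$, $(e_n)\subset X$, $x_0\in X$, (HPPA) is the sequence $x_{n+1}:=\alpha_n x_0+(1-\alpha_n)(J_{\beta_n}(x_n)+e_n)$. (Q1): $\forall k\,\forall n\geq{\rm a}(k)\ \alpha_n\leq\frac{1}{k+1}$. (Q2): $\forall k\ \sum_{i=0}^{{\rm A}(k)}\alpha_i\geq k$. (Q3'): $\forall n\ \beta_n\leq{\rm b}(n)$. (Q3): $\forall k\,\forall n\geq{\rm B}(k)\ \beta_n\geq k$. (Q4): $\forall k\,\forall n\ \sum_{i={\rm E}(k)+1}^{{\rm E}(k)+n}\|e_i\|\leq\frac{1}{k+1}$. Monotone means nondecreasing. $v^{(R)}$ is the $R$-fold composition of $v$ ($v^{(0)}$ the identity). $[a,b]$ is the set of naturals $m$ with $a\le m\le b$. *)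

From Stdlib Require Import Reals Lra Lia ZArith.
Open Scope R_scope.

Record RHilbert : Type := {
  car :> Type;
  hzero : car;
  hadd : car -> car -> car;
  hopp : car -> car;
  hscal : R -> car -> car;
  hinner : car -> car -> R;
  hadd_assoc : forall x y z, hadd x (hadd y z) = hadd (hadd x y) z;
  hadd_comm : forall x y, hadd x y = hadd y x;
  hadd_0 : forall x, hadd x hzero = x;
  hadd_opp : forall x, hadd x (hopp x) = hzero;
  hscal_assoc : forall a b x, hscal a (hscal b x) = hscal (a * b) x;
  hscal_1 : forall x, hscal 1 x = x;
  hscal_distr_vec : forall a x y, hscal a (hadd x y) = hadd (hscal a x) (hscal a y);
  hscal_distr_sc : forall a b x, hscal (a + b) x = hadd (hscal a x) (hscal b x);
  hinner_sym : forall x y, hinner x y = hinner y x;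
  hinner_add_l : forall x y z, hinner (hadd x y) z = hinner x z + hinner y z;
  hinner_scal_l : forall a x y, hinner (hscal a x) y = a * hinner x y;
  hinner_pos : forall x, 0 <= hinner x x;
  hinner_def : forall x, hinner x x = 0 -> x = hzero;
  hcomplete : forall u : nat -> car,
    (forall eps, 0 < eps -> exists M, forall m n, (M <= m)%nat -> (M <= n)%nat ->
        sqrt (hinner (hadd (u m) (hopp (u n))) (hadd (u m) (hopp (u n)))) < eps) ->
    exists l, forall eps, 0 < eps -> exists M, forall n, (M <= n)%nat ->
        sqrt (hinner (hadd (u n) (hopp l)) (hadd (u n) (hopp l))) < eps
}.

Arguments hzero {_}. Arguments hadd {_}. Arguments hopp {_}.
Arguments hscal {_}. Arguments hinner {_}.

Definition hsub {X : RHilbert} (x y : X) : X := hadd x (hopp y).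
Definition hnorm {X : RHilbert} (x : X) : R := sqrt (hinner x x).

(** Set-valued operators as graphs: [Aop x u] means u ∈ A(x). *)
Definition monotone_op {X : RHilbert} (Aop : X -> X -> Prop) : Prop :=
  forall x u y v, Aop x u -> Aop y v -> 0 <= hinner (hsub x y) (hsub u v).

Definition maximal_monotone {X : RHilbert} (Aop : X -> X -> Prop) : Prop :=
  monotone_op Aop /\
  forall x u, (forall y v, Aop y v -> 0 <= hinner (hsub x y) (hsub u v)) -> Aop x u.

(** [J] is the resolvent family of [Aop]: J_beta(x) = (Id + beta A)^{-1}(x),
    i.e. x ∈ J_beta x + beta A(J_beta x), i.e. (x - J_beta x)/beta ∈ A(J_beta x).
    For monotone A this determines J_beta(x) uniquely. *)
Definition is_resolvent {X : RHilbert} (Aop : X -> X -> Prop) (J : R -> X -> X) : Prop :=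
  forall beta x, 0 < beta -> Aop (J beta x) (hscal (/ beta) (hsub x (J beta x))).

Definition HPPA {X : RHilbert} (J : R -> X -> X) (alpha beta : nat -> R)
  (e : nat -> X) (x0 : X) (x : nat -> X) : Prop :=
  x 0%nat = x0 /\
  forall n, x (S n) = hadd (hscal (alpha n) x0)
                         (hscal (1 - alpha n) (hadd (J (beta n) (x n)) (e n))).

Fixpoint rsum (f : nat -> R) (s n : nat) : R :=
  match n with
  | O => 0
  | S n' => rsum f s n' + f (s + n')%nat
  end.

Definition nat_monotone (f : nat -> nat) : Prop :=
  forall m n, (m <= n)%nat -> (f m <= f n)%nat.

(** ceiling of a real, as a natural number (truncated at 0). *)
Definition ceil_nat (r : R) : nat := Z.to_nat (- Int_part (- r)).

Section Rates.
Local Open Scope nat_scope.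
Variables (a Afn b B E : nat -> nat) (Dc Ec : nat).

Definition Ncal : nat := Nat.max (2 * Dc) (Dc + Ec).

Definition sigma1 (k' n' : nat) : nat :=
  (Afn (n' + ceil_nat (ln (16 * INR Ncal ^ 2 * INR (k' + 1))%R)) + 1).

Definition xi (k'' : nat) : nat :=
  Nat.max (a (2 * (2 * Dc + Ec) * (k'' + 1) - 1)) (E (2 * k'' + 1) + 1).

Definition chi1 (k'' : nat) : nat :=
  (Nat.max (xi (4 * k'' + 3)) (B (8 * (Dc + Ec) * (k'' + 1) - 1)) + 1)%nat.

Definition nu (u : nat -> nat) (m : nat) : nat :=
  (Nat.max 2 (b (u m)) * (u m + 1) - 1)%nat.

Definition nuhat (u : nat -> nat) (m : nat) : nat := nu u (chi1 m).

Definition wfun (v : nat -> nat) (NN : nat) (m : nat) : nat :=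
  Nat.max (v (24 * NN * (m + 1) ^ 2)) (24 * NN * (m + 1) ^ 2).

Definition Psi (k' : nat) (u : nat -> nat) : nat :=
  let R0 := (4 * Ncal ^ 4 * (k' + 1) ^ 2)%nat in
  chi1 (24 * Ncal * (Nat.iter R0 (wfun (nuhat u) Ncal) 0%nat + 1) ^ 2).

Definition ktilde (k : nat) : nat := (4 * (k + 1) ^ 2 - 1)%nat.

Definition gfun (k m : nat) : nat :=
  Nat.max m (E (16 * (1 + 4 * Ncal) * (k + 1) ^ 2 - 1) + 1).

Definition hfun (k : nat) (f : nat -> nat) (m : nat) : nat :=
  ((1 + 4 * Ncal) * (16 * (k + 1) ^ 2 * (f (sigma1 (ktilde k) (gfun k m)) + 1) + 1) - 1)%nat.

Definition Delta (k : nat) (f : nat -> nat) : nat :=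
  Psi (32 * (k + 1) ^ 2 - 1) (hfun k f).

Definition Phi1 (k : nat) (f : nat -> nat) : nat :=
  sigma1 (ktilde k) (gfun k (Delta k f)).

End Rates.

(* A finite descent of w |-> |x0 - w|^2 along the nested sets of approximate
   zeros of A (points w with small |w - J_1 w|) produces, within the bound Delta,
   a point z that is itself an approximate zero and an approximate projection of
   x0: <x0 - z, w - z> is almost nonpositive for every finer approximate zero w.
   From chi1 on the iterates are such approximate zeros, so |x_n - z|^2 obeys
   Xu's recursive inequality; by (Q2) the contraction factor prod (1 - alpha_i)
   is tiny after sigma1 steps, and the perturbations, bounded through (Q4) and
   the displacement of z, stay small up to f(n). Hence all x_i with i in [n, f n]
   lie within 1/(2(k+1)) of z. *)

From Stdlib Require Import Reals Lra Lia Psatz ZArith Classical.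
Open Scope R_scope.

Section InnerProduct.
Context {X : RHilbert}.
Implicit Types x y z : X.

Lemma hinner_add_r x y z : hinner x (hadd y z) = hinner x y + hinner x z.
Proof. rewrite !(hinner_sym _ x), hinner_add_l; reflexivity. Qed.

Lemma hinner_scal_r a x y : hinner x (hscal a y) = a * hinner x y.
Proof. rewrite !(hinner_sym _ x), hinner_scal_l; reflexivity. Qed.

Lemma hinner_0_l y : hinner (@hzero X) y = 0.
Proof. assert (H := hinner_add_l X hzero hzero y). rewrite hadd_0 in H. lra. Qed.

Lemma hinner_0_r y : hinner y (@hzero X) = 0.
Proof. rewrite hinner_sym; apply hinner_0_l. Qed.

Lemma hinner_opp_l x y : hinner (hopp x) y = - hinner x y.
Proof.
  assert (H := hinner_add_l X x (hopp x) y). rewrite hadd_opp, hinner_0_l in H. lra.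
Qed.

Lemma hinner_opp_r x y : hinner x (hopp y) = - hinner x y.
Proof. rewrite !(hinner_sym _ x), hinner_opp_l; reflexivity. Qed.

End InnerProduct.

(* Expands inner products of linear expressions into a polynomial in the
   pairwise inner products of the atoms, each pair written in one order. *)
Ltac hinner_expand :=
  unfold hsub in *;
  repeat rewrite ?hinner_add_l, ?hinner_add_r, ?hinner_scal_l, ?hinner_scal_r,
    ?hinner_opp_l, ?hinner_opp_r, ?hinner_0_l, ?hinner_0_r;
  repeat match goal with
  | |- context [hinner ?a ?b] => match goal with |- context [hinner b a] =>
        tryif constr_eq a b then fail else rewrite (hinner_sym _ b a) end end.

Ltac hring := hinner_expand; rewrite ?Rinv_1; ring.

Section Norm.
Context {X : RHilbert}.
Implicit Types u v w : X.

Lemma hnorm_ge0 u : 0 <= hnorm u.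
Proof. apply sqrt_pos. Qed.

Lemma hnorm_mul_self u : hnorm u * hnorm u = hinner u u.
Proof. apply sqrt_sqrt, hinner_pos. Qed.

Lemma hnorm_0 : hnorm (@hzero X) = 0.
Proof. unfold hnorm. rewrite hinner_0_l. apply sqrt_0. Qed.

Lemma hdist_refl u : hnorm (hsub u u) = 0.
Proof.
  unfold hnorm. replace (hinner (hsub u u) (hsub u u)) with 0 by hring. apply sqrt_0.
Qed.

Lemma hdist_sym u v : hnorm (hsub u v) = hnorm (hsub v u).
Proof. unfold hnorm. f_equal. hring. Qed.

Lemma hnorm_le_of_sqr u c : 0 <= c -> hinner u u <= c * c -> hnorm u <= c.
Proof. intros Hc H. pose proof (hnorm_mul_self u). pose proof (hnorm_ge0 u). nra. Qed.

Lemma Rle_of_mul_self_le t c : 0 <= t -> 0 <= c -> t * t <= t * c -> t <= c.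
Proof. intros. nra. Qed.

Lemma Cauchy_Schwarz_sqr u v : hinner u v * hinner u v <= hinner u u * hinner v v.
Proof.
  destruct (Req_dec (hinner v v) 0) as [H0|H0].
  - apply hinner_def in H0. subst. rewrite !hinner_0_r. lra.
  - set (d := hsub (hscal (hinner v v) u) (hscal (hinner u v) v)).
    assert (E : hinner d d = hinner v v * (hinner v v * hinner u u - hinner u v * hinner u v))
      by (unfold d; hring).
    pose proof (hinner_pos X d). pose proof (hinner_pos X v). nra.
Qed.

Lemma Cauchy_Schwarz u v : hinner u v <= hnorm u * hnorm v.
Proof.
  pose proof (Cauchy_Schwarz_sqr u v). pose proof (hnorm_mul_self u).
  pose proof (hnorm_mul_self v). pose proof (hnorm_ge0 u). pose proof (hnorm_ge0 v).
  assert (0 <= hnorm u * hnorm v) by nra. nra.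
Qed.

Lemma hnorm_le_add_of_expansion u v w :
  hinner w w = hinner u u + 2 * hinner u v + hinner v v -> hnorm w <= hnorm u + hnorm v.
Proof.
  intros E. apply hnorm_le_of_sqr.
  - pose proof (hnorm_ge0 u). pose proof (hnorm_ge0 v). lra.
  - rewrite E. pose proof (Cauchy_Schwarz u v).
    pose proof (hnorm_mul_self u). pose proof (hnorm_mul_self v). nra.
Qed.

Lemma hdist_triangle u v w : hnorm (hsub u w) <= hnorm (hsub u v) + hnorm (hsub v w).
Proof. apply hnorm_le_add_of_expansion. hring. Qed.

Lemma hdist_add_l u e w : hnorm (hsub (hadd u e) w) <= hnorm (hsub u w) + hnorm e.
Proof. apply hnorm_le_add_of_expansion. hring. Qed.

Lemma hnorm_scal_le s u : 0 <= s -> hnorm (hscal s u) <= s * hnorm u.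
Proof.
  intros Hs. apply hnorm_le_of_sqr; [pose proof (hnorm_ge0 u); nra|].
  rewrite hinner_scal_l, hinner_scal_r, <- (hnorm_mul_self u). lra.
Qed.

Lemma hdist_convex a u v w : 0 <= a <= 1 ->
  hnorm (hsub (hadd (hscal a u) (hscal (1 - a) v)) w)
    <= a * hnorm (hsub u w) + (1 - a) * hnorm (hsub v w).
Proof.
  intros Ha. apply hnorm_le_of_sqr.
  { pose proof (hnorm_ge0 (hsub u w)). pose proof (hnorm_ge0 (hsub v w)). nra. }
  replace (hinner (hsub (hadd (hscal a u) (hscal (1 - a) v)) w)
                  (hsub (hadd (hscal a u) (hscal (1 - a) v)) w))
    with (a * a * hinner (hsub u w) (hsub u w) + 2 * a * (1 - a) * hinner (hsub u w) (hsub v w)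
          + (1 - a) * (1 - a) * hinner (hsub v w) (hsub v w)) by hring.
  pose proof (Cauchy_Schwarz (hsub u w) (hsub v w)).
  pose proof (hnorm_mul_self (hsub u w)). pose proof (hnorm_mul_self (hsub v w)).
  assert (0 <= a * (1 - a)) by nra. nra.
Qed.

Lemma hdist_convex_r l u v : 0 <= l <= 1 ->
  hnorm (hsub v (hadd (hscal l u) (hscal (1 - l) v))) <= l * hnorm (hsub u v).
Proof.
  intros H. apply hnorm_le_of_sqr; [pose proof (hnorm_ge0 (hsub u v)); nra|].
  replace (hinner (hsub v (hadd (hscal l u) (hscal (1 - l) v)))
                  (hsub v (hadd (hscal l u) (hscal (1 - l) v))))
    with (l * l * hinner (hsub u v) (hsub u v)) by hring.
  rewrite <- (hnorm_mul_self (hsub u v)). nra.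
Qed.

Lemma hdist_convex_l l u v : 0 <= l <= 1 ->
  hnorm (hsub u (hadd (hscal l u) (hscal (1 - l) v))) <= (1 - l) * hnorm (hsub u v).
Proof.
  intros H. apply hnorm_le_of_sqr; [pose proof (hnorm_ge0 (hsub u v)); nra|].
  replace (hinner (hsub u (hadd (hscal l u) (hscal (1 - l) v)))
                  (hsub u (hadd (hscal l u) (hscal (1 - l) v))))
    with ((1 - l) * (1 - l) * hinner (hsub u v) (hsub u v)) by hring.
  rewrite <- (hnorm_mul_self (hsub u v)). nra.
Qed.

Lemma hsqr_dist_convex l u v w :
  hinner (hsub (hadd (hscal l u) (hscal (1 - l) v)) w) (hsub (hadd (hscal l u) (hscal (1 - l) v)) w)
  = l * hinner (hsub u w) (hsub u w) + (1 - l) * hinner (hsub v w) (hsub v w)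
    - l * (1 - l) * hinner (hsub u v) (hsub u v).
Proof. hring. Qed.

Lemma hsqr_dist_to_convex l w u v :
  hinner (hsub w (hadd (hscal l u) (hscal (1 - l) v))) (hsub w (hadd (hscal l u) (hscal (1 - l) v)))
  = hinner (hsub w v) (hsub w v) - 2 * l * hinner (hsub w v) (hsub u v)
    + l * l * hinner (hsub u v) (hsub u v).
Proof. hring. Qed.

Lemma hsqr_dist_anchored a x0 v z : 0 <= a <= 1 ->
  let c := hadd (hscal a x0) (hscal (1 - a) v) in
  hinner (hsub c z) (hsub c z)
  <= (1 - a) * (1 - a) * hinner (hsub v z) (hsub v z) + 2 * a * hinner (hsub x0 z) (hsub c z).
Proof.
  intros Ha c.
  replace (hinner (hsub c z) (hsub c z)) with
    ((1 - a) * (1 - a) * hinner (hsub v z) (hsub v z) + 2 * a * hinner (hsub x0 z) (hsub c z)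
     - a * a * hinner (hsub x0 z) (hsub x0 z)) by (unfold c; hring).
  pose proof (hinner_pos X (hsub x0 z)). nra.
Qed.

End Norm.

Section Resolvent.
Context {X : RHilbert}.
Variable Aop : X -> X -> Prop.
Variable J : R -> X -> X.
Hypothesis Hmon : monotone_op Aop.
Hypothesis HJ : is_resolvent Aop J.

Lemma resolvent_nonexpansive bt u v : 0 < bt ->
  hnorm (hsub (J bt u) (J bt v)) <= hnorm (hsub u v).
Proof.
  intros Hb. set (ju := J bt u). set (jv := J bt v).
  pose proof (Hmon _ _ _ _ (HJ bt u Hb) (HJ bt v Hb)) as M. fold ju jv in M.
  replace (hinner (hsub ju jv) (hsub (hscal (/ bt) (hsub u ju)) (hscal (/ bt) (hsub v jv))))
    with (/ bt * (hinner (hsub ju jv) (hsub u v) - hinner (hsub ju jv) (hsub ju jv))) in M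
    by hring.
  assert (0 < / bt) by (apply Rinv_0_lt_compat; lra).
  pose proof (Cauchy_Schwarz (hsub ju jv) (hsub u v)).
  rewrite <- (hnorm_mul_self (hsub ju jv)) in M.
  apply Rle_of_mul_self_le; try apply hnorm_ge0. nra.
Qed.

Lemma resolvent_dist_zero bt u p : Aop p hzero -> 0 < bt ->
  hnorm (hsub (J bt u) p) <= hnorm (hsub u p).
Proof.
  intros Hp Hb. set (ju := J bt u).
  pose proof (Hmon _ _ _ _ (HJ bt u Hb) Hp) as M. fold ju in M.
  replace (hinner (hsub ju p) (hsub (hscal (/ bt) (hsub u ju)) hzero))
    with (/ bt * (hinner (hsub ju p) (hsub u p) - hinner (hsub ju p) (hsub ju p))) in M
    by hring.
  assert (0 < / bt) by (apply Rinv_0_lt_compat; lra).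
  pose proof (Cauchy_Schwarz (hsub ju p) (hsub u p)).
  rewrite <- (hnorm_mul_self (hsub ju p)) in M.
  apply Rle_of_mul_self_le; try apply hnorm_ge0. nra.
Qed.

Lemma resolvent_displacement_le u v bt : Aop u v -> 0 < bt ->
  hnorm (hsub u (J bt u)) <= bt * hnorm v.
Proof.
  intros Hu Hb. set (ju := J bt u).
  pose proof (Hmon _ _ _ _ (HJ bt u Hb) Hu) as M. fold ju in M.
  replace (hinner (hsub ju u) (hsub (hscal (/ bt) (hsub u ju)) v))
    with (- / bt * hinner (hsub u ju) (hsub u ju) + hinner (hsub u ju) v) in M by hring.
  pose proof (Cauchy_Schwarz (hsub u ju) v).
  rewrite <- (hnorm_mul_self (hsub u ju)) in M.
  assert (M' : hnorm (hsub u ju) * hnorm (hsub u ju) <= bt * hinner (hsub u ju) v).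
  { apply (Rmult_le_compat_l bt) in M; [|lra].
    replace (bt * (- / bt * (hnorm (hsub u ju) * hnorm (hsub u ju)) + hinner (hsub u ju) v))
      with (- (hnorm (hsub u ju) * hnorm (hsub u ju)) + bt * hinner (hsub u ju) v) in M
      by (field; lra).
    lra. }
  apply Rle_of_mul_self_le; [apply hnorm_ge0 | pose proof (hnorm_ge0 v); nra | nra].
Qed.

(* Monotonicity of A at the pair (J_bt u, J_1 u) gives
   A^2 + bt C^2 <= (1 + bt) A C for A = |u - J_bt u| and C = |u - J_1 u|,
   which forces A <= max 1 bt * C. *)
Lemma resolvent_displacement_rescale u bt : 0 < bt ->
  hnorm (hsub u (J bt u)) <= Rmax 1 bt * hnorm (hsub u (J 1 u)).
Proof.
  intros Hb. set (ju := J bt u). set (j1 := J 1 u).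
  pose proof (Hmon _ _ _ _ (HJ bt u Hb) (HJ 1 u Rlt_0_1)) as M. fold ju j1 in M.
  replace (hinner (hsub ju j1) (hsub (hscal (/ bt) (hsub u ju)) (hscal (/ 1) (hsub u j1))))
    with (/ bt * hinner (hsub u ju) (hsub u j1) - hinner (hsub u j1) (hsub u j1)
          - / bt * hinner (hsub u ju) (hsub u ju) + hinner (hsub u ju) (hsub u j1)) in M
    by hring.
  pose proof (Cauchy_Schwarz (hsub u ju) (hsub u j1)).
  rewrite <- (hnorm_mul_self (hsub u ju)), <- (hnorm_mul_self (hsub u j1)) in M.
  set (A := hnorm (hsub u ju)) in *. set (C := hnorm (hsub u j1)) in *.
  set (P := hinner (hsub u ju) (hsub u j1)) in *.
  assert (HA : 0 <= A) by apply hnorm_ge0. assert (HC : 0 <= C) by apply hnorm_ge0.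
  assert (M2 : A * A + bt * (C * C) <= (1 + bt) * P).
  { apply (Rmult_le_compat_l bt) in M; [|lra].
    replace (bt * (/ bt * P - C * C - / bt * (A * A) + P))
      with (P - bt * (C * C) - A * A + bt * P) in M by (field; lra).
    lra. }
  assert (M3 : A * A + bt * (C * C) <= (1 + bt) * (A * C)) by nra.
  destruct (Rle_dec A (Rmax 1 bt * C)) as [h|h]; auto.
  exfalso. assert (A > C) by (pose proof (Rmax_l 1 bt); nra).
  assert (A > bt * C) by (pose proof (Rmax_r 1 bt); nra).
  nra.
Qed.

Lemma resolvent1_displacement_convex l u v dl : 0 <= l <= 1 ->
  hnorm (hsub u (J 1 u)) <= dl -> hnorm (hsub v (J 1 v)) <= dl ->
  let c := hadd (hscal l u) (hscal (1 - l) v) in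
  hinner (hsub c (J 1 c)) (hsub c (J 1 c)) <= dl * dl + dl * hnorm (hsub u v).
Proof.
  intros Hl Hu Hv c. set (jc := J 1 c). set (d := hnorm (hsub u v)).
  assert (U : hnorm (hsub u jc) <= dl + (1 - l) * d).
  { pose proof (hdist_triangle u (J 1 u) jc).
    pose proof (resolvent_nonexpansive 1 u c Rlt_0_1) as N.
    pose proof (hdist_convex_l l u v Hl) as L. fold c d in L. fold jc in N. lra. }
  assert (V : hnorm (hsub v jc) <= dl + l * d).
  { pose proof (hdist_triangle v (J 1 v) jc).
    pose proof (resolvent_nonexpansive 1 v c Rlt_0_1) as N.
    pose proof (hdist_convex_r l u v Hl) as L. fold c d in L. fold jc in N. lra. }
  unfold c. rewrite hsqr_dist_convex. fold c jc.
  rewrite <- (hnorm_mul_self (hsub u jc)), <- (hnorm_mul_self (hsub v jc)),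
    <- (hnorm_mul_self (hsub u v)). fold d.
  pose proof (hnorm_ge0 (hsub u jc)). pose proof (hnorm_ge0 (hsub v jc)).
  assert (0 <= d) by apply hnorm_ge0.
  assert (0 <= dl) by (pose proof (hnorm_ge0 (hsub u (J 1 u))); lra).
  assert (hnorm (hsub u jc) * hnorm (hsub u jc) <= (dl + (1 - l) * d) * (dl + (1 - l) * d)) by nra.
  assert (hnorm (hsub v jc) * hnorm (hsub v jc) <= (dl + l * d) * (dl + l * d)) by nra.
  assert (4 * l * (1 - l) <= 1) by (pose proof (Rle_0_sqr (2 * l - 1)); unfold Rsqr in *; lra).
  assert (0 <= dl * d) by nra.
  assert (l * (hnorm (hsub u jc) * hnorm (hsub u jc))
          <= l * ((dl + (1 - l) * d) * (dl + (1 - l) * d))) by (apply Rmult_le_compat_l; lra).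
  assert ((1 - l) * (hnorm (hsub v jc) * hnorm (hsub v jc))
          <= (1 - l) * ((dl + l * d) * (dl + l * d))) by (apply Rmult_le_compat_l; lra).
  nra.
Qed.

End Resolvent.

Lemma rsum_split f s n m : rsum f s (n + m) = rsum f s n + rsum f (s + n) m.
Proof.
  induction m as [|m IH]; simpl.
  - rewrite Nat.add_0_r. lra.
  - rewrite Nat.add_succ_r. simpl. rewrite IH.
    replace (s + (n + m))%nat with (s + n + m)%nat by lia. lra.
Qed.

Lemma rsum_ge0 f s n : (forall i, 0 <= f i) -> 0 <= rsum f s n.
Proof. intros H; induction n; simpl; [lra|]. specialize (H (s + n)%nat). lra. Qed.

Lemma rsum_le f g s n : (forall i, (s <= i < s + n)%nat -> f i <= g i) ->
  rsum f s n <= rsum g s n.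
Proof.
  intros H; induction n; simpl; [lra|].
  assert (f (s + n)%nat <= g (s + n)%nat) by (apply H; lia).
  assert (rsum f s n <= rsum g s n) by (apply IHn; intros; apply H; lia). lra.
Qed.

Lemma rsum_const c s n : rsum (fun _ => c) s n = INR n * c.
Proof. induction n; simpl rsum; [simpl; lra|]. rewrite IHn, S_INR. lra. Qed.

Lemma rsum_affine c d g s n :
  rsum (fun i => c * (d + g i)) s n = c * (INR n * d + rsum g s n).
Proof. induction n; simpl rsum; [simpl; ring|]. rewrite IHn, S_INR. ring. Qed.

Lemma sum_f_R0_rsum f n : sum_f_R0 f n = rsum f 0 (S n).
Proof. induction n; simpl; [lra|]. simpl in IHn. rewrite IHn. reflexivity. Qed.

Lemma rsum_le_len f s n m : (forall i, 0 <= f i) -> (n <= m)%nat ->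
  rsum f s n <= rsum f s m.
Proof.
  intros H Hnm. replace m with (n + (m - n))%nat by lia. rewrite rsum_split.
  pose proof (rsum_ge0 f (s + n) (m - n) H). lra.
Qed.

Lemma rsum_term_le f s n i : (forall i, 0 <= f i) -> (s <= i < s + n)%nat ->
  f i <= rsum f s n.
Proof.
  intros H Hi. apply Rle_trans with (rsum f s (S (i - s))).
  - simpl. replace (s + (i - s))%nat with i by lia.
    pose proof (rsum_ge0 f s (i - s) H). lra.
  - apply rsum_le_len; auto; lia.
Qed.

Lemma rsum_le_shift f s0 s n : (forall i, 0 <= f i) -> (s0 <= s)%nat ->
  rsum f s n <= rsum f s0 (s - s0 + n).
Proof.
  intros H Hs. rewrite rsum_split. replace (s0 + (s - s0))%nat with s by lia.
  pose proof (rsum_ge0 f s0 (s - s0) H). lra.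
Qed.

Fixpoint rprod (f : nat -> R) (s n : nat) : R :=
  match n with O => 1 | S n' => rprod f s n' * f (s + n')%nat end.

Lemma rprod_one_sub_le_exp al s n : (forall i, 0 <= al i <= 1) ->
  0 <= rprod (fun i => 1 - al i) s n <= exp (- rsum al s n).
Proof.
  intros H. induction n; simpl.
  - rewrite Ropp_0, exp_0. lra.
  - specialize (H (s + n)%nat). pose proof (exp_ineq1_le (- al (s + n)%nat)).
    replace (- (rsum al s n + al (s + n)%nat)) with (- rsum al s n + - al (s + n)%nat) by ring.
    rewrite exp_plus. pose proof (exp_pos (- rsum al s n)). nra.
Qed.

Lemma rprod_one_sub_le_inv al s n Q : (forall i, 0 <= al i <= 1) -> 0 < Q ->
  ln Q <= rsum al s n -> rprod (fun i => 1 - al i) s n <= / Q.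
Proof.
  intros Hal HQ HL. destruct (rprod_one_sub_le_exp al s n Hal) as [_ H].
  eapply Rle_trans; [exact H|].
  rewrite <- (exp_ln Q HQ), <- exp_Ropp.
  destruct (Req_dec (ln Q) (rsum al s n)) as [E|E]; [rewrite E; lra|].
  left. apply exp_increasing. lra.
Qed.

Lemma Xu_recursion_bound (sq al gm : nat -> R) (r : R) n0 m :
  (forall i, 0 <= al i <= 1) -> 0 <= r -> (forall i, 0 <= gm i) ->
  (forall i, (n0 <= i < n0 + m)%nat -> sq (S i) <= (1 - al i) * sq i + al i * r + gm i) ->
  sq (n0 + m)%nat <= rprod (fun i => 1 - al i) n0 m * sq n0 + r + rsum gm n0 m.
Proof.
  intros Ha Hr Hg Hs. induction m.
  - simpl. rewrite Nat.add_0_r. lra.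
  - rewrite Nat.add_succ_r. simpl rprod. simpl rsum.
    assert (IH : sq (n0 + m)%nat <= rprod (fun i => 1 - al i) n0 m * sq n0 + r + rsum gm n0 m)
      by (apply IHm; intros; apply Hs; lia).
    assert (S1 := Hs (n0 + m)%nat ltac:(lia)).
    specialize (Ha (n0 + m)%nat). pose proof (rsum_ge0 gm n0 m Hg).
    assert ((1 - al (n0 + m)%nat) * sq (n0 + m)%nat
            <= (1 - al (n0 + m)%nat) * (rprod (fun i => 1 - al i) n0 m * sq n0 + r + rsum gm n0 m))
      by (apply Rmult_le_compat_l; lra).
    nra.
Qed.

Lemma ceil_nat_ge r : r <= INR (ceil_nat r).
Proof.
  unfold ceil_nat. destruct (base_Int_part (- r)) as [H1 _].
  set (z := Int_part (- r)) in *.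
  destruct (Z_le_gt_dec 0 (- z)) as [Hz|Hz].
  - rewrite INR_IZR_INZ, Z2Nat.id by lia. rewrite opp_IZR. lra.
  - assert (IZR (- z) < 0) by (apply IZR_lt; lia). rewrite opp_IZR in H.
    pose proof (pos_INR (Z.to_nat (- z))). lra.
Qed.

Lemma INR_pred n : (1 <= n)%nat -> INR (n - 1) + 1 = INR n.
Proof. intros H. rewrite <- S_INR. f_equal. lia. Qed.

Lemma iter_le_iter (W : nat -> nat) : (forall m, (m <= W m)%nat) ->
  forall j R0, (j <= R0)%nat -> (Nat.iter j W 0%nat <= Nat.iter R0 W 0%nat)%nat.
Proof.
  intros HW j R0 H. induction H; auto. simpl. specialize (HW (Nat.iter m W 0%nat)). lia.
Qed.

(* A nonnegative functional cannot decrease by eps more than c0 / eps times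
   from its value at p, so along the stages Nat.iter j W 0 some stage j < R0
   already contains an eps-minimiser for the previous stage. *)
Lemma approx_minimizer_along_iter {T : Type} (Zs : nat -> T -> Prop) (phi : T -> R)
  (W : nat -> nat) (R0 : nat) (eps c0 : R) (p : T) :
  (forall K, Zs K p) -> phi p <= c0 -> (forall w, 0 <= phi w) -> c0 < INR R0 * eps ->
  exists j, (j < R0)%nat /\ exists z, Zs (W (Nat.iter j W 0%nat)) z /\
     forall w, Zs (Nat.iter j W 0%nat) w -> phi z <= phi w + eps.
Proof.
  intros Hp Hpc Hnn Hc. apply NNPP. intro Hn.
  assert (Descent : forall t, (t <= R0)%nat ->
    exists w, Zs (Nat.iter (R0 - t) W 0%nat) w /\ phi w + INR t * eps <= phi p).
  { induction t as [|t IH]; intros Ht.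
    - exists p. split; [apply Hp | simpl; lra].
    - destruct (IH ltac:(lia)) as [w [Hw Hw2]].
      set (j := (R0 - S t)%nat).
      replace (R0 - t)%nat with (S j) in Hw by (unfold j; lia). simpl in Hw.
      assert (Hnot : ~ forall w', Zs (Nat.iter j W 0%nat) w' -> phi w <= phi w' + eps).
      { intro Hall. apply Hn. exists j. split; [unfold j; lia|]. exists w. auto. }
      apply not_all_ex_not in Hnot. destruct Hnot as [w' Hw'].
      apply imply_to_and in Hw'. destruct Hw' as [Z1 Z2].
      exists w'. split; [exact Z1|]. rewrite S_INR. apply Rnot_le_lt in Z2. lra. }
  destruct (Descent R0 (le_n _)) as [w [_ Hw]]. specialize (Hnn w). lra.
Qed.

Ltac push_INR := repeat rewrite ?mult_INR, ?plus_INR, ?pow_INR, ?S_INR, ?INR_0.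

Section HPPA_rates.
Variables (X : RHilbert) (Aop : X -> X -> Prop) (J : R -> X -> X)
  (alpha beta : nat -> R) (e : nat -> X) (x0 : X) (x : nat -> X)
  (a Afn b B E : nat -> nat) (Dc Ec : nat) (p : X).
Hypothesis Hmax : maximal_monotone Aop.
Hypothesis HJ : is_resolvent Aop J.
Hypothesis Hal : forall n, 0 < alpha n < 1.
Hypothesis Hbe : forall n, 0 < beta n.
Hypothesis Hx : HPPA J alpha beta e x0 x.
Hypothesis Ma : nat_monotone a.
Hypothesis MA : nat_monotone Afn.
Hypothesis Mb : nat_monotone b.
Hypothesis MB : nat_monotone B.
Hypothesis ME : nat_monotone E.
Hypothesis Q1 : forall k n, (a k <= n)%nat -> alpha n <= 1 / (INR k + 1).
Hypothesis Q2 : forall k, sum_f_R0 alpha (Afn k) >= INR k.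
Hypothesis Q3' : forall n, beta n <= INR (b n).
Hypothesis Q3 : forall k n, (B k <= n)%nat -> beta n >= INR k.
Hypothesis Q4 : forall k n, rsum (fun i => hnorm (e i)) (E k + 1) n <= 1 / (INR k + 1).
Hypothesis HEc : INR Ec >= 1 + sum_f_R0 (fun i => hnorm (e i)) (E 0%nat).
Hypothesis Hp : Aop p hzero.
Hypothesis HDc : INR Dc >= hnorm (hsub x0 p).

Let en i := hnorm (e i).
Let D := INR Dc.
Let Ee := INR Ec.
Let Nr := INR (Ncal Dc Ec).
Let y n := J (beta n) (x n).

Let Hmon : monotone_op Aop := proj1 Hmax.

Lemma alpha_01 i : 0 <= alpha i <= 1.
Proof. pose proof (Hal i). lra. Qed.

Lemma en_ge0 i : 0 <= en i.
Proof. apply hnorm_ge0. Qed.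

Lemma Ee_ge1 : 1 <= Ee.
Proof.
  rewrite sum_f_R0_rsum in HEc.
  pose proof (rsum_ge0 _ 0 (S (E 0%nat)) en_ge0). unfold en, Ee in *. lra.
Qed.

Lemma Ec_ge1 : (1 <= Ec)%nat.
Proof. pose proof Ee_ge1. apply INR_le. simpl. unfold Ee in *. lra. Qed.

Lemma Ncal_ge1 : (1 <= Ncal Dc Ec)%nat.
Proof. pose proof Ec_ge1. unfold Ncal. lia. Qed.

Lemma Nr_ge : 1 <= Nr /\ 2 * D <= Nr /\ D + Ee <= Nr.
Proof.
  pose proof Ee_ge1. pose proof (pos_INR Dc).
  assert (2 * D <= Nr).
  { unfold D, Nr, Ncal. replace (2 * INR Dc) with (INR (2 * Dc)) by (push_INR; simpl; ring).
    apply le_INR, Nat.le_max_l. }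
  assert (D + Ee <= Nr) by (unfold D, Ee, Nr, Ncal; rewrite <- plus_INR; apply le_INR, Nat.le_max_r).
  unfold D in *. lra.
Qed.

Lemma error_sum_le n : rsum en 0 n <= Ee.
Proof.
  pose proof HEc as H. rewrite sum_f_R0_rsum in H. fold en Ee in H.
  destruct (le_lt_dec n (S (E 0%nat))) as [h|h].
  - pose proof (rsum_le_len en 0 n _ en_ge0 h). lra.
  - replace n with (S (E 0%nat) + (n - S (E 0%nat)))%nat by lia.
    rewrite rsum_split. pose proof (Q4 0 (n - S (E 0%nat))) as T. simpl INR in T.
    replace (0 + S (E 0%nat))%nat with (E 0%nat + 1)%nat by lia. fold en in T. lra.
Qed.

Lemma error_tail_term K i : (E K + 1 <= i)%nat -> en i <= 1 / (INR K + 1).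
Proof.
  intros H. pose proof (Q4 K (i - E K)). fold en in H0.
  pose proof (rsum_term_le en (E K + 1) (i - E K) i en_ge0 ltac:(lia)). lra.
Qed.

Lemma error_tail_term_le_half K i : (1 <= K)%nat -> (E K + 1 <= i)%nat -> en i <= / 2.
Proof.
  intros HK Hi. pose proof (error_tail_term K i Hi). apply le_INR in HK. simpl in HK.
  assert (1 / (INR K + 1) <= / 2)
    by (unfold Rdiv; rewrite Rmult_1_l; apply Rinv_le_contravar; lra).
  lra.
Qed.

Lemma error_tail_sum K s n : (E K + 1 <= s)%nat -> rsum en s n <= 1 / (INR K + 1).
Proof.
  intros H. pose proof (rsum_le_shift en (E K + 1) s n en_ge0 H).
  pose proof (Q4 K (s - (E K + 1) + n)). fold en in H1. lra.
Qed.

Lemma x_succ n : x (S n) = hadd (hscal (alpha n) x0) (hscal (1 - alpha n) (hadd (y n) (e n))).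
Proof. apply (proj2 Hx). Qed.

Lemma y_dist_zero n : hnorm (hsub (y n) p) <= hnorm (hsub (x n) p).
Proof. apply (resolvent_dist_zero Aop J Hmon HJ); auto. Qed.

Lemma x_dist_zero_le n : hnorm (hsub (x n) p) <= D + rsum en 0 n.
Proof.
  induction n as [|n IH].
  - rewrite (proj1 Hx). simpl. unfold D. lra.
  - rewrite x_succ. pose proof (alpha_01 n).
    pose proof (hdist_convex (alpha n) x0 (hadd (y n) (e n)) p ltac:(lra)).
    pose proof (hdist_add_l (y n) (e n) p). pose proof (y_dist_zero n).
    pose proof (rsum_ge0 en 0 n en_ge0). pose proof (en_ge0 n). simpl rsum. fold (en n) in *.
    assert ((1 - alpha n) * hnorm (hsub (hadd (y n) (e n)) p)
            <= (1 - alpha n) * (D + rsum en 0 n + en n)) by (apply Rmult_le_compat_l; lra).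
    unfold D in *. nra.
Qed.

Lemma x_bounded n : hnorm (hsub (x n) p) <= D + Ee.
Proof. pose proof (x_dist_zero_le n). pose proof (error_sum_le n). lra. Qed.

Lemma y_bounded n : hnorm (hsub (y n) p) <= D + Ee.
Proof. pose proof (x_bounded n). pose proof (y_dist_zero n). lra. Qed.

Definition approx_zero K w :=
  hnorm (hsub w (J 1 w)) <= / (INR K + 1) /\ hnorm (hsub w p) <= D + Ee.

Lemma approx_zero_anti K K' w : (K <= K')%nat -> approx_zero K' w -> approx_zero K w.
Proof.
  intros H [H1 H2]. split; auto. apply le_INR in H.
  pose proof (pos_INR K). eapply Rle_trans; [exact H1|]. apply Rinv_le_contravar; lra.
Qed.

Lemma approx_zero_p K : approx_zero K p.
Proof.
  split.
  - pose proof (resolvent_displacement_le Aop J Hmon HJ p hzero 1 Hp Rlt_0_1) as H.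
    rewrite hnorm_0 in H. pose proof (pos_INR K).
    assert (0 < / (INR K + 1)) by (apply Rinv_0_lt_compat; lra). lra.
  - rewrite hdist_refl. pose proof (pos_INR Dc). pose proof Ee_ge1. unfold D. lra.
Qed.

Lemma approx_zero_dist w v : approx_zero 0 w -> approx_zero 0 v -> hnorm (hsub w v) <= 2 * Nr.
Proof.
  intros [_ Hw] [_ Hv]. pose proof (hdist_triangle w p v). rewrite (hdist_sym p v) in H.
  pose proof Nr_ge. lra.
Qed.

Lemma x_succ_displacement m :
  hnorm (hsub (x (S m)) (J 1 (x (S m))))
    <= 2 * (alpha m * (2 * D + Ee) + en m) + / beta m * (2 * (D + Ee)).
Proof.
  pose proof (alpha_01 m) as Ha.
  assert (T1 : hnorm (hsub (x (S m)) (y m)) <= alpha m * hnorm (hsub x0 (y m)) + en m).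
  { rewrite x_succ.
    pose proof (hdist_convex (alpha m) x0 (hadd (y m) (e m)) (y m) Ha).
    pose proof (hdist_add_l (y m) (e m) (y m)) as Hd. rewrite hdist_refl in Hd.
    pose proof (en_ge0 m). fold (en m) in *.
    assert ((1 - alpha m) * hnorm (hsub (hadd (y m) (e m)) (y m)) <= en m) by nra. lra. }
  assert (T2 : hnorm (hsub x0 (y m)) <= 2 * D + Ee).
  { pose proof (hdist_triangle x0 p (y m)) as T. rewrite (hdist_sym p (y m)) in T.
    pose proof (y_bounded m). unfold D, Ee in *. lra. }
  assert (T3 : hnorm (hsub (y m) (J 1 (y m))) <= / beta m * (2 * (D + Ee))).
  { pose proof (resolvent_displacement_le Aop J Hmon HJ (y m) _ 1
                  (HJ (beta m) (x m) (Hbe m)) Rlt_0_1) as T.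
    change (J (beta m) (x m)) with (y m) in T.
    assert (0 < / beta m) by (apply Rinv_0_lt_compat, Hbe).
    pose proof (hnorm_scal_le (/ beta m) (hsub (x m) (y m)) ltac:(lra)).
    pose proof (hdist_triangle (x m) p (y m)) as T'. rewrite (hdist_sym p (y m)) in T'.
    pose proof (x_bounded m). pose proof (y_bounded m).
    assert (/ beta m * hnorm (hsub (x m) (y m)) <= / beta m * (2 * (D + Ee)))
      by (apply Rmult_le_compat_l; lra).
    lra. }
  pose proof (hdist_triangle (x (S m)) (y m) (J 1 (x (S m)))).
  pose proof (hdist_triangle (y m) (J 1 (y m)) (J 1 (x (S m)))).
  pose proof (resolvent_nonexpansive Aop J Hmon HJ 1 (y m) (x (S m)) Rlt_0_1) as N.
  rewrite (hdist_sym (y m) (x (S m))) in N.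
  assert (alpha m * hnorm (hsub x0 (y m)) <= alpha m * (2 * D + Ee))
    by (apply Rmult_le_compat_l; lra).
  lra.
Qed.

(* Asymptotic regularity with rate chi1, u = K + 1: the Q1 and Q4 parts of chi1
   make alpha_m (2D + Ee) and e_m at most 1/(8u), the Q3 part makes the
   beta-term of x_succ_displacement at most 1/(2u). *)
Lemma x_approx_zero K n : (chi1 a B E Dc Ec K <= n)%nat -> approx_zero K (x n).
Proof.
  intros Hn. unfold chi1, xi in Hn.
  destruct n as [|m]; [lia|].
  split; [|apply x_bounded].
  pose proof Ec_ge1. pose proof Ee_ge1. pose proof (pos_INR Dc). pose proof (pos_INR K).
  set (u := INR K + 1). set (G := 2 * D + Ee). set (c := D + Ee).
  assert (A1 : alpha m <= 1 / (8 * G * u)).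
  { assert (Ha : (a (2 * (2 * Dc + Ec) * (4 * K + 3 + 1) - 1) <= m)%nat) by lia.
    pose proof (Q1 _ _ Ha) as A. rewrite INR_pred in A by nia.
    replace (INR (2 * (2 * Dc + Ec) * (4 * K + 3 + 1))) with (8 * G * u) in A
      by (unfold G, u, D, Ee; push_INR; simpl; ring).
    exact A. }
  assert (E1 : en m <= 1 / (8 * u)).
  { pose proof (error_tail_term (2 * (4 * K + 3) + 1) m ltac:(lia)) as T.
    replace (INR (2 * (4 * K + 3) + 1) + 1) with (8 * u) in T by (unfold u; push_INR; simpl; ring).
    exact T. }
  assert (B1 : beta m >= 8 * c * u - 1).
  { assert (Hb : (B (8 * (Dc + Ec) * (K + 1) - 1) <= m)%nat) by lia.
    pose proof (Q3 _ _ Hb) as T. rewrite minus_INR in T by nia.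
    replace (INR (8 * (Dc + Ec) * (K + 1))) with (8 * c * u) in T
      by (unfold c, u, D, Ee; push_INR; simpl; ring).
    simpl INR in T. exact T. }
  pose proof (x_succ_displacement m) as Disp. fold G c in Disp.
  assert (Hu : 1 <= u) by (unfold u; lra).
  assert (HG : 1 <= G) by (unfold G, D; lra).
  assert (Hc : 1 <= c) by (unfold c, D; lra).
  assert (P1 : alpha m * G <= / (8 * u)).
  { apply Rmult_le_compat_r with (r := G) in A1; [|lra].
    replace (1 / (8 * G * u) * G) with (/ (8 * u)) in A1 by (field; lra). lra. }
  assert (P2 : / beta m * (2 * c) <= / (2 * u)).
  { pose proof (Hbe m). assert (beta m >= 4 * c * u) by nra.
    apply (Rmult_le_reg_l (beta m)); auto.
    replace (beta m * (/ beta m * (2 * c))) with (2 * c) by (field; lra).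
    apply (Rmult_le_reg_l (2 * u)); [lra|].
    replace (2 * u * (beta m * / (2 * u))) with (beta m) by (field; lra). nra. }
  unfold Rdiv in E1. rewrite Rmult_1_l in E1.
  assert (/ (8 * u) + / (8 * u) = / (4 * u)) by (field; lra).
  assert (2 * / (4 * u) + / (2 * u) = / u) by (field; lra).
  lra.
Qed.

Lemma approx_zero_convex m l w v : 0 <= l <= 1 ->
  approx_zero (24 * Ncal Dc Ec * (m + 1) ^ 2) w -> approx_zero (24 * Ncal Dc Ec * (m + 1) ^ 2) v ->
  approx_zero m (hadd (hscal l w) (hscal (1 - l) v)).
Proof.
  intros Hl Hw Hv. set (c := hadd (hscal l w) (hscal (1 - l) v)).
  destruct Nr_ge as [HN _].
  assert (Hd : hnorm (hsub w v) <= 2 * Nr).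
  { apply approx_zero_dist; (eapply approx_zero_anti; [|eassumption]); lia. }
  split; fold c.
  - pose proof (resolvent1_displacement_convex Aop J Hmon HJ l w v _ Hl (proj1 Hw) (proj1 Hv))
      as AC. cbv zeta in AC. fold c in AC.
    set (t := INR m + 1).
    assert (Ht : 1 <= t) by (unfold t; pose proof (pos_INR m); lra).
    replace (INR (24 * Ncal Dc Ec * (m + 1) ^ 2) + 1) with (24 * Nr * (t * t) + 1) in AC
      by (unfold t, Nr; push_INR; simpl; ring).
    set (dl := / (24 * Nr * (t * t) + 1)) in *.
    assert (Hdl0 : 0 < dl) by (unfold dl; apply Rinv_0_lt_compat; nra).
    assert (Hdl1 : dl * (24 * Nr * (t * t) + 1) = 1) by (unfold dl; field; nra).
    apply hnorm_le_of_sqr; [left; apply Rinv_0_lt_compat; lra|].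
    assert (dl * dl + dl * hnorm (hsub w v) <= 3 * Nr * dl).
    { assert (0 <= 24 * Nr * (t * t)) by (apply Rmult_le_pos; nra).
      assert (dl <= 1) by nra.
      assert (dl * dl <= dl * Nr) by (apply Rmult_le_compat_l; lra).
      assert (dl * hnorm (hsub w v) <= dl * (2 * Nr)) by (apply Rmult_le_compat_l; lra).
      lra. }
    assert (3 * Nr * dl * (t * t) <= 1) by nra.
    assert (/ t * / t * (t * t) = 1) by (field; lra).
    assert (3 * Nr * dl <= / t * / t) by (apply (Rmult_le_reg_r (t * t)); nra).
    lra.
  - pose proof (hdist_convex l w v p Hl). fold c in H.
    destruct Hw as [_ Hw], Hv as [_ Hv].
    assert (l * hnorm (hsub w p) + (1 - l) * hnorm (hsub v p) <= D + Ee) by nra. lra.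
Qed.

Let phi w := hinner (hsub x0 w) (hsub x0 w).

(* An eps-minimiser z of phi over approx_zero m, compared with the points
   l w + (1 - l) z of approx_zero m for l = 1 / (8 Nr^2 kp), is a quasi-projection
   of x0 onto the finer set approx_zero (24 Nr (m + 1)^2). *)
Lemma quasi_projection_ineq m kp z : 1 <= kp ->
  approx_zero (24 * Ncal Dc Ec * (m + 1) ^ 2) z ->
  (forall w, approx_zero m w -> phi z <= phi w + / (8 * Nr ^ 2 * kp ^ 2)) ->
  forall w, approx_zero (24 * Ncal Dc Ec * (m + 1) ^ 2) w ->
  2 * hinner (hsub x0 z) (hsub w z) <= 3 / (2 * kp).
Proof.
  intros Hkp Hz Hmin w Hw.
  destruct Nr_ge as [HN _].
  set (l := / (8 * Nr ^ 2 * kp)).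
  assert (Hl0 : 0 < l) by (unfold l; apply Rinv_0_lt_compat; nra).
  assert (Hl1 : l <= 1) by (unfold l; rewrite <- Rinv_1; apply Rinv_le_contravar; nra).
  assert (Hd : hnorm (hsub w z) <= 2 * Nr).
  { apply approx_zero_dist; (eapply approx_zero_anti; [|eassumption]); lia. }
  specialize (Hmin _ (approx_zero_convex m l w z ltac:(lra) Hw Hz)).
  unfold phi in Hmin. rewrite hsqr_dist_to_convex, <- (hnorm_mul_self (hsub w z)) in Hmin.
  set (P := hinner (hsub x0 z) (hsub w z)) in *.
  assert (l * l * (hnorm (hsub w z) * hnorm (hsub w z)) <= l * l * (4 * Nr * Nr)).
  { apply Rmult_le_compat_l; [nra|]. pose proof (hnorm_ge0 (hsub w z)). nra. }
  assert (l * l * (4 * Nr * Nr) + / (8 * Nr ^ 2 * kp ^ 2) = l * (3 / (2 * kp)))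
    by (unfold l; field; nra).
  apply (Rmult_le_reg_l l); [exact Hl0|]. lra.
Qed.

Lemma approx_zero_resolvent_displacement z h M : approx_zero M z ->
  (Nat.max 2 (b h) * (h + 1) - 1 <= M)%nat ->
  forall bt, 0 < bt -> bt <= INR (b h) -> hnorm (hsub z (J bt z)) <= / (INR h + 1).
Proof.
  intros [Hz _] HM bt Hbt Hbh.
  pose proof (resolvent_displacement_rescale Aop J Hmon HJ z bt Hbt).
  set (Mx := Nat.max 2 (b h)) in *.
  assert (HMx : 2 <= INR Mx /\ INR (b h) <= INR Mx).
  { split; [replace 2 with (INR 2) by (simpl; ring)|]; apply le_INR; unfold Mx; lia. }
  assert (E1 : INR (Mx * (h + 1) - 1) + 1 = INR Mx * (INR h + 1)).
  { rewrite INR_pred by (unfold Mx; nia). push_INR. simpl. ring. }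
  apply le_INR in HM.
  assert (0 < INR h + 1) by (pose proof (pos_INR h); lra).
  assert (/ (INR M + 1) <= / (INR Mx * (INR h + 1))) by (apply Rinv_le_contravar; nra).
  assert (Rmax 1 bt <= INR Mx) by (apply Rmax_lub; lra).
  pose proof (hnorm_ge0 (hsub z (J 1 z))).
  assert (H5 : Rmax 1 bt * hnorm (hsub z (J 1 z)) <= INR Mx * / (INR Mx * (INR h + 1))).
  { apply Rmult_le_compat; [pose proof (Rmax_l 1 bt); lra | auto | auto | lra]. }
  replace (INR Mx * / (INR Mx * (INR h + 1))) with (/ (INR h + 1)) in H5 by (field; lra).
  lra.
Qed.

Lemma chi1_monotone : nat_monotone (chi1 a B E Dc Ec).
Proof.
  intros m n H. unfold chi1, xi. apply Nat.add_le_mono_r.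
  apply Nat.max_le_compat; [apply Nat.max_le_compat; [apply Ma | apply Nat.add_le_mono_r; apply ME]
                            | apply MB]; nia.
Qed.

(* The descent runs over the stages m -> wfun (nuhat u) m, so that the
   minimiser z also lies in approx_zero (nu u n) for n = chi1 (24 Nr (m + 1)^2),
   which controls its displacement |z - J_bt z| for all bt <= b (u n). *)
Lemma quasi_projection_point k' u : exists n z,
  (n <= Psi a b B E Dc Ec k' u)%nat /\ hnorm (hsub z p) <= D + Ee /\
  (forall i, (n <= i)%nat -> 2 * hinner (hsub x0 z) (hsub (x i) z) <= 3 / (2 * (INR k' + 1))) /\
  (forall bt, 0 < bt -> bt <= INR (b (u n)) -> hnorm (hsub z (J bt z)) <= / (INR (u n) + 1)).
Proof.
  destruct Nr_ge as [HN1 [HN2 _]]. pose proof (pos_INR Dc).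
  set (R0 := (4 * Ncal Dc Ec ^ 4 * (k' + 1) ^ 2)%nat).
  set (W := wfun (nuhat a b B E Dc Ec u) (Ncal Dc Ec)).
  set (kp := INR k' + 1).
  assert (Hkp : 1 <= kp) by (unfold kp; pose proof (pos_INR k'); lra).
  destruct (approx_minimizer_along_iter approx_zero phi W R0 (/ (8 * Nr ^ 2 * kp ^ 2)) (D * D) p
              approx_zero_p) as [j [Hj [z [Hz Hmin]]]].
  { unfold phi. rewrite <- hnorm_mul_self. pose proof (hnorm_ge0 (hsub x0 p)). unfold D. nra. }
  { intros w. apply hinner_pos. }
  { replace (INR R0) with (4 * Nr ^ 4 * kp ^ 2) by (unfold R0, kp, Nr; push_INR; simpl; ring).
    replace (4 * Nr ^ 4 * kp ^ 2 * / (8 * Nr ^ 2 * kp ^ 2)) with (Nr * Nr / 2) by (field; nra).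
    unfold D in *. nra. }
  set (mj := Nat.iter j W 0%nat) in *.
  set (q := (24 * Ncal Dc Ec * (mj + 1) ^ 2)%nat).
  exists (chi1 a B E Dc Ec q), z.
  change (W mj) with (Nat.max (nu b u (chi1 a B E Dc Ec q)) q) in Hz.
  assert (Hzq : approx_zero q z) by (eapply approx_zero_anti; [|exact Hz]; lia).
  split; [|split; [exact (proj2 Hz) | split]].
  - unfold Psi. cbv zeta. apply chi1_monotone.
    apply Nat.mul_le_mono_l, Nat.pow_le_mono_l, Nat.add_le_mono_r, iter_le_iter; [|lia].
    intros m0. pose proof Ncal_ge1. unfold W, wfun.
    assert (m0 <= 24 * Ncal Dc Ec * (m0 + 1) ^ 2)%nat by (cbn [Nat.pow]; nia). lia.
  - intros i Hi. apply (quasi_projection_ineq mj kp z Hkp Hzq Hmin), x_approx_zero, Hi.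
  - apply (approx_zero_resolvent_displacement z _ _ Hz). unfold nu. lia.
Qed.

Lemma x_dist_sqr_step z i r dl : hnorm (hsub z p) <= D + Ee ->
  2 * hinner (hsub x0 z) (hsub (x (S i)) z) <= r ->
  hnorm (hsub z (J (beta i) z)) <= dl -> 0 <= dl -> dl + en i <= 1 ->
  hinner (hsub (x (S i)) z) (hsub (x (S i)) z)
    <= (1 - alpha i) * hinner (hsub (x i) z) (hsub (x i) z) + alpha i * r
       + (1 + 4 * Nr) * (dl + en i).
Proof.
  intros Hzp Hproj Hfix Hdl Hrho.
  destruct Nr_ge as [HN1 [_ HN3]]. pose proof (alpha_01 i) as Ha.
  set (v := hadd (y i) (e i)).
  set (t := hnorm (hsub (x i) z)). set (rho := dl + en i) in *.
  assert (Hv : hnorm (hsub v z) <= t + rho).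
  { pose proof (hdist_add_l (y i) (e i) z) as V1.
    pose proof (hdist_triangle (y i) (J (beta i) z) z) as V2.
    pose proof (resolvent_nonexpansive Aop J Hmon HJ (beta i) (x i) z (Hbe i)) as V3.
    rewrite (hdist_sym (J (beta i) z) z) in V2.
    fold v in V1. fold t in V3. change (J (beta i) (x i)) with (y i) in V3.
    unfold rho, en in *. lra. }
  assert (Ht : t <= 2 * Nr).
  { pose proof (hdist_triangle (x i) p z) as T. rewrite (hdist_sym p z) in T.
    pose proof (x_bounded i). fold t in T. unfold D, Ee, Nr in *. lra. }
  assert (Ht0 : 0 <= t) by apply hnorm_ge0.
  assert (Hrho0 : 0 <= rho) by (pose proof (en_ge0 i); unfold rho; lra).
  assert (HV : hinner (hsub v z) (hsub v z) <= t * t + rho * (4 * Nr + 1)).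
  { rewrite <- hnorm_mul_self. pose proof (hnorm_ge0 (hsub v z)).
    assert (hnorm (hsub v z) * hnorm (hsub v z) <= (t + rho) * (t + rho)) by nra. nra. }
  rewrite x_succ in Hproj |- *. fold v in Hproj |- *.
  pose proof (hsqr_dist_anchored (alpha i) x0 v z Ha) as XS. cbv zeta in XS.
  rewrite <- (hnorm_mul_self (hsub (x i) z)). fold t.
  pose proof (hinner_pos X (hsub v z)).
  assert ((1 - alpha i) * (1 - alpha i) * hinner (hsub v z) (hsub v z)
          <= (1 - alpha i) * hinner (hsub v z) (hsub v z)).
  { assert (0 <= (1 - alpha i) * hinner (hsub v z) (hsub v z)) by nra. nra. }
  assert ((1 - alpha i) * hinner (hsub v z) (hsub v z)
          <= (1 - alpha i) * (t * t + rho * (4 * Nr + 1))) by (apply Rmult_le_compat_l; lra).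
  assert ((1 - alpha i) * (rho * (4 * Nr + 1)) <= (1 + 4 * Nr) * rho)
    by (assert (0 <= rho * (4 * Nr + 1)) by (apply Rmult_le_pos; lra); nra).
  assert (2 * alpha i * hinner (hsub x0 z) (hsub (hadd (hscal (alpha i) x0) (hscal (1 - alpha i) v)) z)
          <= alpha i * r) by nra.
  nra.
Qed.

Lemma alpha_sum_ge s L M : (Afn (s + L) < M)%nat ->
  (s + L <= M)%nat /\ INR L <= rsum alpha s (M - s).
Proof.
  intros HM. pose proof (Q2 (s + L)) as Hq. rewrite sum_f_R0_rsum in Hq.
  assert (Hle1 : forall t n, rsum alpha t n <= INR n).
  { intros t n. rewrite <- (Rmult_1_r (INR n)), <- (rsum_const 1 t n).
    apply rsum_le. intros; apply alpha_01. }
  assert (C1 : rsum alpha 0 (S (Afn (s + L))) <= rsum alpha 0 M)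
    by (apply rsum_le_len; [intros; apply alpha_01 | lia]).
  assert (HsL : (s + L <= M)%nat).
  { apply INR_le. pose proof (Hle1 0%nat (S (Afn (s + L)))).
    pose proof (le_INR _ _ HM). rewrite S_INR in *. lra. }
  split; [exact HsL|].
  replace M with (s + (M - s))%nat in C1 at 1 by lia. rewrite rsum_split in C1.
  pose proof (Hle1 0%nat s). rewrite plus_INR in Hq. rewrite Nat.add_0_l in C1. lra.
Qed.

Lemma perturbation_sum_le k Ke h F s m :
  INR Ke + 1 = 16 * (1 + 4 * Nr) * (INR k + 1) ^ 2 ->
  INR h + 1 = (1 + 4 * Nr) * (16 * (INR k + 1) ^ 2 * (INR F + 1) + 1) ->
  (E Ke + 1 <= s)%nat -> (m <= F + 1)%nat ->
  (1 + 4 * Nr) * (INR m * / (INR h + 1) + rsum en s m) <= / (8 * (INR k + 1) ^ 2).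
Proof.
  intros HKe Hh Hs Hm. destruct Nr_ge as [HN1 _].
  set (uk := INR k + 1) in *.
  assert (Huk : 1 <= uk) by (unfold uk; pose proof (pos_INR k); lra).
  pose proof (pos_INR F).
  assert (V1 : (1 + 4 * Nr) * rsum en s m <= / (16 * uk ^ 2)).
  { pose proof (error_tail_sum Ke s m Hs) as T. rewrite HKe in T.
    apply Rmult_le_compat_l with (r := 1 + 4 * Nr) in T; [|lra].
    replace ((1 + 4 * Nr) * (1 / (16 * (1 + 4 * Nr) * uk ^ 2))) with (/ (16 * uk ^ 2)) in T
      by (field; nra).
    exact T. }
  assert (V2 : (1 + 4 * Nr) * (INR m * / (INR h + 1)) <= / (16 * uk ^ 2)).
  { apply le_INR in Hm. rewrite plus_INR in Hm. simpl INR in Hm.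
    rewrite Hh.
    replace ((1 + 4 * Nr) * (INR m * / ((1 + 4 * Nr) * (16 * uk ^ 2 * (INR F + 1) + 1))))
      with (INR m / (16 * uk ^ 2 * (INR F + 1) + 1)) by (field; nra).
    apply (Rmult_le_reg_r (16 * uk ^ 2 * (INR F + 1) + 1)); [nra|].
    unfold Rdiv. rewrite Rmult_assoc, Rinv_l by nra.
    replace (/ (16 * uk ^ 2) * (16 * uk ^ 2 * (INR F + 1) + 1))
      with (INR F + 1 + / (16 * uk ^ 2)) by (field; nra).
    assert (0 < / (16 * uk ^ 2)) by (apply Rinv_0_lt_compat; nra).
    lra. }
  replace (/ (8 * uk ^ 2)) with (/ (16 * uk ^ 2) + / (16 * uk ^ 2)) by (field; nra).
  lra.
Qed.

Lemma x_dist_sqr_Xu_bound z n0 r h s M : hnorm (hsub z p) <= D + Ee -> 0 <= r ->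
  (forall i, (n0 <= i)%nat -> 2 * hinner (hsub x0 z) (hsub (x i) z) <= r) ->
  (forall bt, 0 < bt -> bt <= INR (b h) -> hnorm (hsub z (J bt z)) <= / (INR h + 1)) ->
  (forall i, (s <= i)%nat -> en i <= / 2) ->
  (1 <= h)%nat -> (n0 <= s <= M)%nat -> (M <= h)%nat ->
  hinner (hsub (x M) z) (hsub (x M) z)
    <= rprod (fun i => 1 - alpha i) s (M - s) * hinner (hsub (x s) z) (hsub (x s) z) + r
       + (1 + 4 * Nr) * (INR (M - s) * / (INR h + 1) + rsum en s (M - s)).
Proof.
  intros Hzp Hr Hproj Hfix Hen Hh1 Hs HM. destruct Nr_ge as [HN1 _].
  set (sq := fun i => hinner (hsub (x i) z) (hsub (x i) z)).
  set (gm := fun i => (1 + 4 * Nr) * (/ (INR h + 1) + en i)).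
  assert (Hh0 : 0 < / (INR h + 1)) by (apply Rinv_0_lt_compat; pose proof (pos_INR h); lra).
  assert (Hh2 : / (INR h + 1) <= / 2).
  { apply Rinv_le_contravar; [lra|]. apply le_INR in Hh1. simpl in Hh1. lra. }
  assert (Hgm : forall i, 0 <= gm i)
    by (intros i; unfold gm; pose proof (en_ge0 i); apply Rmult_le_pos; lra).
  assert (Hrec : forall i, (s <= i < s + (M - s))%nat ->
            sq (S i) <= (1 - alpha i) * sq i + alpha i * r + gm i).
  { intros i Hi. apply x_dist_sqr_step; [exact Hzp | apply Hproj; lia | | lra |].
    - apply Hfix; [apply Hbe|]. pose proof (Q3' i).
      pose proof (le_INR _ _ (Mb i h ltac:(lia))). lra.
    - pose proof (Hen i ltac:(lia)). lra. }
  pose proof (Xu_recursion_bound sq alpha gm r s (M - s) alpha_01 Hr Hgm Hrec) as XU.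
  replace (s + (M - s))%nat with M in XU by lia.
  unfold gm in XU. rewrite rsum_affine in XU. exact XU.
Qed.

Lemma x_dist_sqr_contracted z s M Q : hnorm (hsub z p) <= D + Ee -> 0 < Q ->
  (Afn (s + ceil_nat (ln Q)) < M)%nat ->
  rprod (fun i => 1 - alpha i) s (M - s) * hinner (hsub (x s) z) (hsub (x s) z)
    <= 4 * Nr ^ 2 / Q.
Proof.
  intros Hzp HQ HM.
  destruct (alpha_sum_ge s (ceil_nat (ln Q)) M HM) as [_ HL].
  pose proof (ceil_nat_ge (ln Q)).
  assert (HPi : rprod (fun i => 1 - alpha i) s (M - s) <= / Q)
    by (apply rprod_one_sub_le_inv; [exact alpha_01 | exact HQ | lra]).
  pose proof (rprod_one_sub_le_exp alpha s (M - s) alpha_01) as [Pi0 _].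
  assert (Hsq : hinner (hsub (x s) z) (hsub (x s) z) <= 4 * Nr ^ 2).
  { rewrite <- hnorm_mul_self.
    pose proof (hdist_triangle (x s) p z) as T. rewrite (hdist_sym p z) in T.
    pose proof (x_bounded s). pose proof (hnorm_ge0 (hsub (x s) z)).
    destruct Nr_ge as [_ [_ HN3]]. nra. }
  pose proof (hinner_pos X (hsub (x s) z)).
  unfold Rdiv. rewrite Rmult_comm. apply Rmult_le_compat; lra.
Qed.

(* With r = 3 / (64 (k+1)^2) the three terms of x_dist_sqr_Xu_bound are at most
   4/64, 3/64 and 8/64 of 1 / (k+1)^2. *)
Lemma x_close_to_quasi_projection k f n0 z : hnorm (hsub z p) <= D + Ee ->
  (forall i, (n0 <= i)%nat -> 2 * hinner (hsub x0 z) (hsub (x i) z) <= 3 / (64 * (INR k + 1) ^ 2)) ->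
  (forall bt, 0 < bt -> bt <= INR (b (hfun Afn E Dc Ec k f n0)) ->
     hnorm (hsub z (J bt z)) <= / (INR (hfun Afn E Dc Ec k f n0) + 1)) ->
  let n := sigma1 Afn Dc Ec (ktilde k) (gfun E Dc Ec k n0) in
  forall M, (n <= M <= f n)%nat -> hnorm (hsub (x M) z) <= / (2 * (INR k + 1)).
Proof.
  intros Hzp Hproj Hfix n M HM.
  destruct Nr_ge as [HN1 _]. pose proof Ncal_ge1.
  set (s := gfun E Dc Ec k n0). set (F := f n). set (h := hfun Afn E Dc Ec k f n0) in *.
  set (uk := INR k + 1) in *.
  assert (Huk : 1 <= uk) by (unfold uk; pose proof (pos_INR k); lra).
  assert (Huk2 : 1 <= uk ^ 2) by nra.
  set (Ke := (16 * (1 + 4 * Ncal Dc Ec) * (k + 1) ^ 2 - 1)%nat).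
  assert (HKe : INR Ke + 1 = 16 * (1 + 4 * Nr) * uk ^ 2).
  { unfold Ke. rewrite INR_pred by (cbn [Nat.pow]; nia). unfold Nr, uk. push_INR. simpl. ring. }
  assert (Hhdef : h = ((1 + 4 * Ncal Dc Ec) * (16 * (k + 1) ^ 2 * (F + 1) + 1) - 1)%nat)
    by reflexivity.
  assert (Hh : INR h + 1 = (1 + 4 * Nr) * (16 * uk ^ 2 * (INR F + 1) + 1)).
  { rewrite Hhdef, INR_pred by (cbn [Nat.pow]; nia). unfold Nr, uk. push_INR. simpl. ring. }
  assert (Hs : (n0 <= s /\ E Ke + 1 <= s)%nat) by (unfold s, gfun, Ke; lia).
  set (Q := 16 * INR (Ncal Dc Ec) ^ 2 * INR (ktilde k + 1)).
  assert (HQ : Q = 64 * Nr ^ 2 * uk ^ 2).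
  { unfold Q, ktilde. rewrite plus_INR, INR_pred by (cbn [Nat.pow]; nia).
    unfold Nr, uk. push_INR. simpl. ring. }
  assert (HQ0 : 0 < Q) by (rewrite HQ; nra).
  assert (Hn : n = (Afn (s + ceil_nat (ln Q)) + 1)%nat) by reflexivity.
  assert (HsM : (s <= M)%nat) by (pose proof (alpha_sum_ge s (ceil_nat (ln Q)) M ltac:(lia)); lia).
  assert (Hen : forall i, (s <= i)%nat -> en i <= / 2)
    by (intros i Hi; apply (error_tail_term_le_half Ke); [unfold Ke; cbn [Nat.pow]; nia | lia]).
  assert (Hr : 0 <= 3 / (64 * uk ^ 2))
    by (apply Rmult_le_pos; [lra | left; apply Rinv_0_lt_compat; nra]).
  pose proof (x_dist_sqr_Xu_bound z n0 _ h s M Hzp Hr Hproj Hfix Hen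
                ltac:(rewrite Hhdef; cbn [Nat.pow]; nia) ltac:(lia)
                ltac:(rewrite Hhdef; cbn [Nat.pow]; nia)) as XU.
  pose proof (x_dist_sqr_contracted z s M Q Hzp HQ0 ltac:(lia)) as Hprod.
  replace (4 * Nr ^ 2 / Q) with (/ (16 * uk ^ 2)) in Hprod by (rewrite HQ; field; nra).
  pose proof (perturbation_sum_le k Ke h F s (M - s) HKe Hh ltac:(lia) ltac:(lia)) as Hgm.
  apply hnorm_le_of_sqr; [left; apply Rinv_0_lt_compat; lra|].
  replace (/ (2 * uk) * / (2 * uk))
    with (/ (16 * uk ^ 2) + 3 / (64 * uk ^ 2) + / (8 * uk ^ 2) + / (64 * uk ^ 2)) by (field; lra).
  assert (0 < / (64 * uk ^ 2)) by (apply Rinv_0_lt_compat; nra).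
  fold uk in Hgm. lra.
Qed.

Lemma HPPA_metastability k f :
  exists n : nat, (n <= Phi1 a Afn b B E Dc Ec k f)%nat /\
    forall i j : nat, (n <= i <= f n)%nat -> (n <= j <= f n)%nat ->
      hnorm (hsub (x i) (x j)) <= 1 / (INR k + 1).
Proof.
  destruct (quasi_projection_point (32 * (k + 1) ^ 2 - 1) (hfun Afn E Dc Ec k f))
    as [n0 [z [Hn0 [Hzp [Hproj Hfix]]]]].
  assert (Hk : 2 * (INR (32 * (k + 1) ^ 2 - 1) + 1) = 64 * (INR k + 1) ^ 2)
    by (rewrite INR_pred by (cbn [Nat.pow]; nia); push_INR; simpl; ring).
  rewrite Hk in Hproj.
  pose proof (x_close_to_quasi_projection k f n0 z Hzp Hproj Hfix) as Hclose.
  cbv zeta in Hclose.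
  exists (sigma1 Afn Dc Ec (ktilde k) (gfun E Dc Ec k n0)). split.
  - unfold Phi1, Delta, sigma1, gfun.
    apply Nat.add_le_mono_r, MA, Nat.add_le_mono_r, Nat.max_le_compat_r, Hn0.
  - intros i j Hi Hj.
    pose proof (hdist_triangle (x i) z (x j)). rewrite (hdist_sym z (x j)) in *.
    pose proof (Hclose i Hi). pose proof (Hclose j Hj).
    replace (1 / (INR k + 1)) with (/ (2 * (INR k + 1)) + / (2 * (INR k + 1)))
      by (field; pose proof (pos_INR k); lra).
    lra.
Qed.

End HPPA_rates.

Theorem mainTheorem13
  (X : RHilbert) (Aop : X -> X -> Prop) (J : R -> X -> X)
  (alpha beta : nat -> R) (e : nat -> X) (x0 : X) (x : nat -> X)
  (a Afn b B E : nat -> nat) (Dc Ec : nat) (p : X) :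
  maximal_monotone Aop ->
  is_resolvent Aop J ->
  (forall n, 0 < alpha n < 1) ->
  (forall n, 0 < beta n) ->
  HPPA J alpha beta e x0 x ->
  nat_monotone a -> nat_monotone Afn -> nat_monotone b ->
  nat_monotone B -> nat_monotone E ->
  (forall k n, (a k <= n)%nat -> alpha n <= 1 / (INR k + 1)) ->
  (forall k, sum_f_R0 alpha (Afn k) >= INR k) ->
  (forall n, beta n <= INR (b n)) ->
  (forall k n, (B k <= n)%nat -> beta n >= INR k) ->
  (forall k n, rsum (fun i => hnorm (e i)) (E k + 1) n <= 1 / (INR k + 1)) ->
  INR Ec >= 1 + sum_f_R0 (fun i => hnorm (e i)) (E 0%nat) ->
  Aop p hzero ->
  INR Dc >= hnorm (hsub x0 p) ->
  forall (k : nat) (f : nat -> nat), nat_monotone f ->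
  exists n : nat, (n <= Phi1 a Afn b B E Dc Ec k f)%nat /\
    forall i j : nat, (n <= i <= f n)%nat -> (n <= j <= f n)%nat ->
      hnorm (hsub (x i) (x j)) <= 1 / (INR k + 1).
Proof.
  intros. eapply HPPA_metastability; eauto.
Qed.
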